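(* Let $d\ge3$, $h\ge1$, and let $\ell$ be a leaf (a vertex at distance $h$ from the root). Then the exponent of $G(d,h)$ equals the order of $\bar{\mathbf{x}}_\ell$ in $G(d,h)$.
   Context: Let $\mathcal{T}(d,h)$ be the rooted tree in which the root $0$ has $d$ children, every vertex at distance $1,\dots,h-1$ from the root has $d-1$ children, and the vertices at distance $h$ are leaves. Let $V$ be its vertex set, $A$ its adjacency matrix, $\Delta := dI-A$, and $\Lambda\subset\mathbb{Z}^V$ the lattice spanned by the rows of $\Delta$. Then $G(d,h):=\mathbb{Z}^V/\Lambda$; $\{\mathbf{x}_i:i\in V\}$ is the standard basis of $\mathbb{Z}^V$ and $\bar{\mathbf{v}}$ denotes the image of $\mathbf{v}$ in $G(d,h)$. The exponent is the least common multiple of the orders of the elements. *)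

From HB Require Import structures.
From mathcomp Require Import all_boot all_order all_algebra.
From Stdlib Require Import ClassicalEpsilon.
Set Implicit Arguments. Unset Strict Implicit. Unset Printing Implicit Defensive.
Import Order.TTheory GRing.Theory Num.Theory.
Local Open Scope ring_scope.

(* A vertex of T(d,h) is encoded by its depth k <= h and its path from the root:
   a function f : 'I_h -> 'I_d, where f i (i < k) is the index of the child taken
   at step i (f 0 < d at the root, f i < d-1 for 0 < i < k), and f i = 0 for i >= k. *)
Definition vert_ok (d h : nat) (x : 'I_h.+1 * {ffun 'I_h -> 'I_d}) : bool :=
  [forall i : 'I_h,
     if (i < x.1)%N then ((0 < i)%N ==> (x.2 i < d.-1)%N)
     else (x.2 i == 0 :> nat)].

Definition tvert (d h : nat) := {x : 'I_h.+1 * {ffun 'I_h -> 'I_d} | @vert_ok d h x}.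

Definition depth d h (u : tvert d h) : nat := (val u).1.
Definition tpath d h (u : tvert d h) : {ffun 'I_h -> 'I_d} := (val u).2.

Definition parent d h (u w : tvert d h) : bool :=
  (depth w == (depth u).+1)%N &&
  [forall i : 'I_h, (i != depth u :> nat) ==> (tpath w i == tpath u i)].

Definition adj d h (u w : tvert d h) : bool := parent u w || parent w u.

Definition Delta d h (u w : tvert d h) : int :=
  (if u == w then (d%:Z) else 0) - (if adj u w then 1 else 0).

Definition inLambda d h (v : tvert d h -> int) : Prop :=
  exists c : tvert d h -> int, forall j, v j = \sum_i c i * Delta i j.

Definition xbasis d h (i : tvert d h) : tvert d h -> int :=
  fun j => if j == i then 1 else 0.

(* n * vbar = 0 in G(d,h) = Z^V / Lambda *)
Definition kills d h (n : nat) (v : tvert d h -> int) : Prop :=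
  inLambda (fun j => n%:Z * v j).

Definition is_order d h (v : tvert d h -> int) (n : nat) : Prop :=
  (0 < n)%N /\ kills n v /\ (forall m : nat, (0 < m)%N -> kills m v -> (n <= m)%N).

(* the gorder of vbar (0 if infinite) *)
Definition gorder d h (v : tvert d h -> int) : nat :=
  match excluded_middle_informative (exists n, is_order v n) with
  | left H => proj1_sig (constructive_indefinite_description _ H)
  | right _ => 0%N
  end.

Definition is_lcm_of (S : nat -> Prop) (e : nat) : Prop :=
  (forall o, S o -> (o %| e)%N) /\
  (forall m, (forall o, S o -> (o %| m)%N) -> (e %| m)%N).

Definition is_exponent (d h : nat) (e : nat) : Prop :=
  is_lcm_of (fun o => exists v : tvert d h -> int, o = gorder v) e.

(** Multiplying a vertex by [d] and subtracting the row of [Delta] at that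
    vertex leaves the sum of its neighbours. Hence, if [u] is a child of [w],
    then [x_w] is congruent modulo [Lambda] to [d x_u] minus the sum of the
    children of [u], and any [n] killing all vertices one level down also kills
    [x_w]. Swapping child labels level by level is a tree automorphism that maps
    any leaf to any other, so the order [e] of [x_l] kills every leaf, hence
    every vertex, hence all of [G(d,h)]; [e] is therefore the exponent. *)
From mathcomp Require Import all_boot all_order all_algebra perm.
From mathcomp Require Import ring zify.
From Stdlib Require Import ClassicalEpsilon.
Set Implicit Arguments. Unset Strict Implicit. Unset Printing Implicit Defensive.
Import Order.TTheory GRing.Theory Num.Theory.

Section Lattice.
Local Open Scope ring_scope.
Variables d h : nat.
Local Notation V := (tvert d h).
Implicit Types (u w : V) (v : V -> int).

Lemma inLambda_ext v1 v2 : v1 =1 v2 -> inLambda v1 -> inLambda v2.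
Proof. by move=> E [c Hc]; exists c => j; rewrite -E Hc. Qed.

Lemma inLambda0 : inLambda (fun _ : V => 0).
Proof. by exists (fun _ => 0) => j; rewrite big1 // => i _; rewrite mul0r. Qed.

Lemma inLambdaD v1 v2 :
  inLambda v1 -> inLambda v2 -> inLambda (fun j => v1 j + v2 j).
Proof.
move=> [c1 H1] [c2 H2]; exists (fun i => c1 i + c2 i) => j.
by rewrite H1 H2 -big_split; apply: eq_bigr => i _; rewrite mulrDl.
Qed.

Lemma inLambdaZ (a : int) v : inLambda v -> inLambda (fun j => a * v j).
Proof.
move=> [c Hc]; exists (fun i => a * c i) => j.
by rewrite Hc mulr_sumr; apply: eq_bigr => i _; rewrite mulrA.
Qed.

Lemma inLambda_sum (I : Type) (r : seq I) (P : pred I) (a : I -> int)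
    (f : I -> V -> int) :
  (forall i, P i -> inLambda (f i)) ->
  inLambda (fun j => \sum_(i <- r | P i) a i * f i j).
Proof.
move=> Hf; elim: r => [|x r IHr].
  by apply: inLambda_ext inLambda0 => j; rewrite big_nil.
case Px: (P x); last by apply: inLambda_ext IHr => j; rewrite big_cons Px.
apply: inLambda_ext (inLambdaD (inLambdaZ (a x) (Hf x Px)) IHr) => j.
by rewrite big_cons Px.
Qed.

Lemma sum_xbasis (P : pred V) (a : V -> int) j :
  \sum_(i | P i) a i * xbasis i j = if P j then a j else 0.
Proof.
rewrite /xbasis; case: ifP => Pj.
  rewrite (bigD1 j) //= eqxx mulr1 big1 ?addr0 // => i /andP[_ /negbTE ij].
  by rewrite eq_sym ij mulr0.
by rewrite big1 // => i Pi; case: eqP => [ji|_]; [rewrite -ji Pj in Pi | rewrite mulr0].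
Qed.

Lemma inLambda_row u : inLambda (Delta u).
Proof.
exists (xbasis u) => j; rewrite (bigD1 u) //= /xbasis eqxx mul1r big1 ?addr0 //.
by move=> i /negbTE ->; rewrite mul0r.
Qed.

Lemma kills_ext n v1 v2 : v1 =1 v2 -> kills n v1 -> kills n v2.
Proof. by move=> E; apply: inLambda_ext => j; rewrite E. Qed.

Lemma kills0 v : kills 0 v.
Proof. by apply: inLambda_ext inLambda0 => j; rewrite mul0r. Qed.

Lemma killsD n v1 v2 : kills n v1 -> kills n v2 -> kills n (fun j => v1 j + v2 j).
Proof. by move=> k1 k2; apply: inLambda_ext (inLambdaD k1 k2) => j; rewrite mulrDr. Qed.

Lemma killsZ n (a : int) v : kills n v -> kills n (fun j => a * v j).
Proof. by move=> /(inLambdaZ a); apply: inLambda_ext => j; rewrite mulrCA. Qed.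

Lemma kills_row n u : kills n (Delta u).
Proof. exact/inLambdaZ/inLambda_row. Qed.

Lemma kills_sum n (I : Type) (r : seq I) (P : pred I) (a : I -> int)
    (f : I -> V -> int) :
  (forall i, P i -> kills n (f i)) ->
  kills n (fun j => \sum_(i <- r | P i) a i * f i j).
Proof.
move=> Hf; apply: inLambda_ext (inLambda_sum r a Hf) => j.
by rewrite mulr_sumr; apply: eq_bigr => i _; rewrite mulrCA.
Qed.

Lemma kills_of_xbasis n v : (forall w, kills n (xbasis w)) -> kills n v.
Proof.
move=> kx; have := kills_sum (index_enum V) v (P := predT) (fun w _ => kx w).
by apply: kills_ext => j; rewrite sum_xbasis.
Qed.

Lemma kills_modn m n v : kills m v -> kills n v -> kills (m %% n) v.
Proof.
move=> km kn; apply: inLambda_ext (inLambdaD km (inLambdaZ (- (m %/ n)%:Z) kn)) => j.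
have mE : m%:Z = (m %/ n)%:Z * n%:Z + (m %% n)%:Z by rewrite -PoszM -PoszD -divn_eq.
by rewrite mE; ring.
Qed.

Lemma is_order_uniq v n1 n2 : is_order v n1 -> is_order v n2 -> n1 = n2.
Proof.
by move=> [n1_gt0 [k1 min1]] [n2_gt0 [k2 min2]]; apply/eqP; rewrite eqn_leq min1 ?min2.
Qed.

Lemma gorderE v n : is_order v n -> gorder v = n.
Proof.
move=> ord_n; rewrite /gorder.
case: excluded_middle_informative => [ex|[]]; last by exists n.
by case: constructive_indefinite_description => m /= /is_order_uniq/(_ ord_n).
Qed.

Lemma kills_gorder v : kills (gorder v) v.
Proof.
rewrite /gorder; case: excluded_middle_informative => [ex|_]; last exact: kills0.
by case: constructive_indefinite_description => m /= [_ []].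
Qed.

Lemma exists_order v m : (0 < m)%N -> kills m v -> exists n, is_order v n.
Proof.
move=> m_gt0 km.
pose P k := if excluded_middle_informative ((0 < k)%N /\ kills k v) then true else false.
have PP k : reflect ((0 < k)%N /\ kills k v) (P k).
  by rewrite /P; case: excluded_middle_informative => H; constructor.
have [|n /PP[n_gt0 kn] min_n] := ex_minnP (ex_intro P m _); first exact/PP.
by exists n; do 2!split=> //; move=> k k_gt0 kk; apply/min_n/PP.
Qed.

Lemma order_dvd v n m : is_order v n -> kills m v -> (n %| m)%N.
Proof.
move=> [n_gt0 [kn min_n]] km; apply: contraT; rewrite -lt0n => r_gt0.
by have := min_n _ r_gt0 (kills_modn km kn); rewrite leqNgt ltn_mod n_gt0.
Qed.

Lemma gorder_dvd v m : kills m v -> (gorder v %| m)%N.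
Proof.
case: (posnP m) => [-> _|m_gt0 km]; first exact: dvdn0.
have [n ord_n] := exists_order m_gt0 km.
by rewrite (gorderE ord_n); apply: order_dvd ord_n km.
Qed.

End Lattice.

Lemma is_lcm_of_dvd (S : nat -> Prop) e :
  S e -> (forall o, S o -> (o %| e)%N) -> is_lcm_of S e.
Proof. by move=> Se dvd_e; split=> // m /(_ e Se). Qed.

Section Tree.
Variables d h : nat.
Local Notation V := (tvert d h).
Implicit Types u w : V.

Lemma depth_le u : (depth u <= h)%N.
Proof. by rewrite -ltnS ltn_ord. Qed.

Lemma tpath_ge_depth u (i : 'I_h) : (depth u <= i)%N -> tpath u i = 0 :> nat.
Proof. by move=> hi; have /forallP/(_ i) := valP u; rewrite ltnNge hi => /eqP. Qed.

Lemma tpath_lt u (i : 'I_h) : (i < depth u)%N -> (0 < i)%N -> (tpath u i < d.-1)%N.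
Proof. by move=> hi i_gt0; have /forallP/(_ i) := valP u; rewrite hi i_gt0. Qed.

Lemma tvert_eq u w : depth u = depth w -> tpath u =1 tpath w -> u = w.
Proof.
case: u w => [[a f] ?] [[b g] ?]; rewrite /depth /tpath /= => ab fg.
by apply: val_inj; congr pair; [apply: val_inj | apply/ffunP].
Qed.

Lemma parent_depth u w : parent u w -> depth w = (depth u).+1.
Proof. by case/andP=> /eqP. Qed.

Lemma parent_uniq u1 u2 w : parent u1 w -> parent u2 w -> u1 = u2.
Proof.
move=> /andP[/eqP d1 /forallP p1] /andP[/eqP d2 /forallP p2].
have d12 : depth u1 = depth u2 by apply: succn_inj; rewrite -d1 -d2.
apply: tvert_eq => // i; case: (eqVneq (i : nat) (depth u1)) => [e|ne].
  by apply: val_inj; rewrite /= !tpath_ge_depth -?d12 ?e.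
by move: (implyP (p1 i) ne) (implyP (p2 i)); rewrite -d12 => /eqP <- /(_ ne) /eqP.
Qed.

Lemma exists_child w : (1 < d)%N -> (depth w < h)%N -> exists u, parent w u.
Proof.
move=> d_gt1 hw.
have ok : vert_ok (@Ordinal h.+1 (depth w).+1 hw, tpath w).
  apply/forallP => i /=; rewrite ltnS leq_eqVlt.
  case: (eqVneq (i : nat) (depth w)) => [e|ne] /=.
    by apply/implyP => _; rewrite tpath_ge_depth ?e //; case: d d_gt1 => [|[]].
  by have /forallP/(_ i) := valP w; rewrite ltn_neqAle ne.
exists (exist (@vert_ok d h) _ ok); rewrite /parent /depth /tpath /= eqxx.
by apply/forallP => i; apply/implyP.
Qed.

End Tree.

Section Automorphism.
Variables d h : nat.
Local Notation V := (tvert d h).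
Variable sigma : V -> V.
Hypothesis sigma_inj : injective sigma.
Hypothesis parent_sigma : forall u w, parent (sigma u) (sigma w) = parent u w.

Lemma Delta_sigma u w : Delta (sigma u) (sigma w) = Delta u w.
Proof. by rewrite /Delta /adj !parent_sigma (inj_eq sigma_inj). Qed.

Lemma inLambda_sigma (v : V -> int) : inLambda v -> inLambda (fun j => v (sigma j)).
Proof.
move=> [c Hc]; exists (fun i => c (sigma i)) => j.
by rewrite Hc (reindex_inj sigma_inj); apply: eq_bigr => i _; rewrite Delta_sigma.
Qed.

End Automorphism.

Section LeafSwap.
Variables d h : nat.
Local Notation V := (tvert d h).
Variables l l' : V.
Hypotheses (hl : depth l = h) (hl' : depth l' = h).

(** Labels at positions below the depth of [u] are padding zeros and must stay
    fixed, so the transposition acts only on the labels of actual edges. *)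
Definition swap_path (u : V) : {ffun 'I_h -> 'I_d} :=
  [ffun i : 'I_h => if (i < depth u)%N then tperm (tpath l i) (tpath l' i) (tpath u i)
             else tpath u i].

Lemma swap_path_ok u : vert_ok ((val u).1, swap_path u).
Proof.
apply/forallP => i /=; have /forallP/(_ i) := valP u.
rewrite /swap_path ffunE; case: ifP => // hi /implyP lt_u; apply/implyP => i_gt0.
have lt_l : (tpath l i < d.-1)%N by apply: tpath_lt; rewrite ?hl.
have lt_l' : (tpath l' i < d.-1)%N by apply: tpath_lt; rewrite ?hl'.
by case: tpermP => // _ _; exact: lt_u.
Qed.

Definition leaf_swap (u : V) : V := exist (@vert_ok d h) _ (swap_path_ok u).

Lemma depth_leaf_swap u : depth (leaf_swap u) = depth u.
Proof. by []. Qed.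

Lemma tpath_leaf_swap u i : tpath (leaf_swap u) i =
  if (i < depth u)%N then tperm (tpath l i) (tpath l' i) (tpath u i) else tpath u i.
Proof. by rewrite /tpath /= ffunE. Qed.

Lemma leaf_swapK : involutive leaf_swap.
Proof.
move=> u; apply: tvert_eq => // i; rewrite !tpath_leaf_swap.
by rewrite depth_leaf_swap; case: (i < depth u); rewrite ?tpermK.
Qed.

Lemma parent_leaf_swap u w : parent (leaf_swap u) (leaf_swap w) = parent u w.
Proof.
rewrite /parent !depth_leaf_swap; case: eqP => //= dw; apply: eq_forallb => i.
rewrite !tpath_leaf_swap dw ltnS; case: (ltngtP i (depth u)) => // hi.
by rewrite (inj_eq perm_inj).
Qed.

Lemma leaf_swap_l' : leaf_swap l' = l.
Proof.
apply: tvert_eq => [|i]; first by rewrite depth_leaf_swap hl hl'.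
by rewrite tpath_leaf_swap hl' ltn_ord tpermR.
Qed.

Lemma kills_leaf_swap n : kills n (xbasis l) -> kills n (xbasis l').
Proof.
move/(inLambda_sigma (inv_inj leaf_swapK) parent_leaf_swap); apply: inLambda_ext => j.
by rewrite /xbasis -leaf_swap_l' (inj_eq (inv_inj leaf_swapK)).
Qed.

End LeafSwap.

Section Descent.
Local Open Scope ring_scope.
Variables d h : nat.
Local Notation V := (tvert d h).

Lemma xbasis_parentE (w u : V) j : parent w u ->
  xbasis w j = d%:Z * xbasis u j - Delta u j - \sum_(i | parent u i) 1 * xbasis i j.
Proof.
move=> pwu; rewrite sum_xbasis.
have adjE : adj u j = parent u j || (j == w).
  by congr orb; apply/idP/eqP => [/parent_uniq/(_ pwu)|->].
have /negbTE puw : ~~ parent u w.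
  by apply/negP => /parent_depth; rewrite (parent_depth pwu); lia.
rewrite /Delta adjE /xbasis (eq_sym u j); case: (eqVneq j w) => [->|_].
  by rewrite puw orbT; case: eqP => _ /=; ring.
by rewrite orbF; case: eqP => _; case: parent => /=; ring.
Qed.

Variable n : nat.

Lemma kills_xbasis_parent (w u : V) : parent w u -> kills n (xbasis u) ->
  (forall i, parent u i -> kills n (xbasis i)) -> kills n (xbasis w).
Proof.
move=> pwu ku kc.
have := killsD (killsD (killsZ d ku) (killsZ (-1) (kills_row n u)))
               (killsZ (-1) (kills_sum (index_enum V) (fun=> 1) kc)).
by apply: kills_ext => j; rewrite (xbasis_parentE j pwu); ring.
Qed.

Lemma kills_xbasis_all : (1 < d)%N ->
  (forall l : V, depth l = h -> kills n (xbasis l)) -> forall w : V, kills n (xbasis w).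
Proof.
move=> d_gt1 kleaf.
suff IH k (w : V) : (h - k <= depth w)%N -> kills n (xbasis w).
  by move=> w; apply: (IH h); rewrite subnn.
elim: k w => [|k IHk] w hw.
  by rewrite subn0 in hw; apply/kleaf/eqP; rewrite eqn_leq depth_le.
have [|hk] := leqP (h - k) (depth w); first exact: IHk.
have [u pwu] := exists_child d_gt1 (leq_trans hk (leq_subr k h)).
have du := parent_depth pwu.
apply: (kills_xbasis_parent pwu); first by apply: IHk; lia.
by move=> i /parent_depth di; apply: IHk; lia.
Qed.

End Descent.

Theorem lemma7p4 (d h : nat) (hd : (3 <= d)%N) (hh : (1 <= h)%N)
  (l : tvert d h) (hl : depth l = h) :
  is_exponent d h (gorder (xbasis l)).
Proof.
set e := gorder (xbasis l).
have kill_leaves (l' : tvert d h) : depth l' = h -> kills e (xbasis l').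
  by move=> hl'; apply: (kills_leaf_swap hl hl' (kills_gorder _)).
have kill_all (v : tvert d h -> int) : kills e v.
  by apply/kills_of_xbasis/kills_xbasis_all => //; apply: ltnW.
apply: is_lcm_of_dvd; first by exists (xbasis l).
by move=> _ [v ->]; apply: gorder_dvd.
Qed.
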